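(* For all arbitrarily large integers $n$ and $y$ such that $n=\sum_{i=0}^h y^i$ for some integer $h\ge0$, there exists a trie $\mathcal T$ with $n$ nodes and height $h$ such that (1) $n\mathcal H_k(\mathcal T)=0$ for every integer $k\ge1$, and (2) $(n-1)\mathcal H^{label}_k(\mathcal T)\ge (n-1)\log y$ for every integer $k\ge0$.
   Context: A trie over a finite totally ordered alphabet $\Sigma$ is a rooted ordered tree with edges labeled by symbols of $\Sigma$ such that edges leaving the same node have distinct labels and siblings are ordered by their incoming labels; its height is the maximum depth of a node (root has depth 0). For node $u$: $out(u)$ is the set of labels of edges leaving $u$; $\lambda(u)$ is the label of the edge entering $u$, with $\lambda(\text{root})=\#\notin\Sigma$; $\pi(u)$ is the parent, $\pi(\text{root})=\text{root}$; $\lambda_0(u)=\epsilon$, $\lambda_k(u)=\lambda_{k-1}(\pi(u))\cdot\lambda(u)$. For a length-$k$ string $w$ and $c\in\Sigma$: $n_w=|\{u:\lambda_k(u)=w\}|$, $n_{w,c}=|\{u:\lambda_k(u)=w,\ c\in out(u)\}|$. Logs base 2, $0\log(x/0)=0$. $\mathcal H_k(\mathcal T)=\sum_{w}\sum_{c\in\Sigma}\left[\frac{n_{w,c}}{n}\log\frac{n_w}{n_{w,c}}+\frac{n_w-n_{w,c}}{n}\log\frac{n_w}{n_w-n_{w,c}}\right]$ over contexts $w$ with $n_w>0$. For a string $X$ of length $\ell>0$ with $\ell_c$ occurrences of $c$, $\mathcal H_0(X)=\sum_c\frac{\ell_c}{\ell}\log\frac{\ell}{\ell_c}$ (and $0$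 for the empty string). $cover(w)$ is the concatenation (any order) of the labels of all edges leaving nodes $u$ with $\lambda_k(u)=w$, and $(n-1)\mathcal H^{label}_k(\mathcal T)=\sum_w|cover(w)|\,\mathcal H_0(cover(w))$. *)

From mathcomp Require Import all_boot all_order all_algebra.
From mathcomp Require Import reals exp.
Set Implicit Arguments. Unset Strict Implicit. Unset Printing Implicit Defensive.
Import Order.TTheory GRing.Theory Num.Theory.
Local Open Scope ring_scope.

(* A trie over alphabet [T] is represented by its (duplicate-free) list of
   nodes, each node being the word of edge labels on the path from the root
   (root = [::], children of [u] are [rcons u c]).  Siblings automatically have distinct labels, and the
   sibling order is the order of the labels. *)
Section Trie.
Variable T : finType.

Definition parent (u : seq T) : seq T := take (size u).-1 u.

Definition is_trie (N : seq (seq T)) : bool :=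
  [&& uniq N, [::] \in N & all (fun u => parent u \in N) N].

Definition height (N : seq (seq T)) : nat := \max_(u <- N) size u.

Definition out (N : seq (seq T)) (u : seq T) : seq T :=
  [seq c <- enum T | rcons u c \in N].

(* lambda(u): label of the incoming edge, None = '#' for the root *)
Definition lam (u : seq T) : option T :=
  if u is x :: s then Some (last x s) else None.

Fixpoint ctx (k : nat) (u : seq T) : seq (option T) :=
  if k is k'.+1 then rcons (ctx k' (parent u)) (lam u) else [::].

Definition nw (N : seq (seq T)) k (w : seq (option T)) : nat :=
  count (fun u => ctx k u == w) N.
Definition nwc (N : seq (seq T)) k (w : seq (option T)) (c : T) : nat :=
  count (fun u => (ctx k u == w) && (c \in out N u)) N.

Definition contexts (N : seq (seq T)) k : seq (seq (option T)) :=
  undup (map (ctx k) N).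

Variable R : realType.

Definition log2 (x : R) : R := ln x / ln 2.

Definition xlogterm (a b : nat) : R :=
  if a == 0%N then 0 else a%:R * log2 (b%:R / a%:R).

Definition Hk (N : seq (seq T)) (k : nat) : R :=
  \sum_(w <- contexts N k) \sum_(c : T)
     (xlogterm (nwc N k w c) (nw N k w) / (size N)%:R
      + xlogterm (nw N k w - nwc N k w c) (nw N k w) / (size N)%:R).

Definition H0 (X : seq T) : R :=
  if size X == 0%N then 0
  else \sum_(c : T) xlogterm (count_mem c X) (size X) / (size X)%:R.

Definition cover (N : seq (seq T)) k (w : seq (option T)) : seq T :=
  flatten [seq out N u | u <- N & ctx k u == w].

(* (n-1) H^label_k(T) *)
Definition labelHk_times (N : seq (seq T)) (k : nat) : R :=
  \sum_(w <- contexts N k) (size (cover N k w))%:R * H0 (cover N k w).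
End Trie.

From Pilot Require Import Defs.
From mathcomp Require Import all_boot all_order all_algebra.
From mathcomp Require Import reals exp.
Set Implicit Arguments. Unset Strict Implicit. Unset Printing Implicit Defensive.
Import Order.TTheory GRing.Theory Num.Theory.

(* Split the alphabet [0, (h+1) y) into h+1 blocks of y consecutive letters
   and take the complete y-ary trie of height h whose edges at depth m are
   labelled by the m-th block.  The label of the edge entering a node then
   determines its depth, and the outgoing labels of a node depend only on
   its depth, so every context of length k >= 1 predicts out(u) exactly and
   H_k vanishes.  On the other hand each node contributes either nothing or
   a whole block of y distinct letters to its cover, so no letter occurs in
   cover(w) more than |cover(w)|/y times, which forces H_0(cover(w)) >= log y;
   the covers together hold the n - 1 edges. *)

Section Entropy.
Variables (T : finType) (R : realType).
Local Open Scope ring_scope.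

Lemma sum_count_mem (X : seq T) : (\sum_(c : T) count_mem c X)%N = size X.
Proof.
elim: X => [|x X IHX] /=; first by rewrite big1.
by rewrite big_split /= IHX (bigD1 x) //= eqxx big1 // => c /negbTE; rewrite eq_sym => ->.
Qed.

Lemma xlogtermnn (a : nat) : xlogterm R a a = 0.
Proof.
rewrite /xlogterm; case: eqP => // /eqP a_neq0.
by rewrite divff ?pnatr_eq0 // /log2 ln1 mul0r mulr0.
Qed.

Lemma xlogterm0n (b : nat) : xlogterm R 0 b = 0.
Proof. by rewrite /xlogterm eqxx. Qed.

Lemma H0_ge_log2 (y : nat) (X : seq T) : (0 < y)%N ->
  (forall c, y * count_mem c X <= size X)%N ->
  (size X)%:R * log2 y%:R <= (size X)%:R * H0 R X.
Proof.
move=> y_gt0 count_le; rewrite /H0; case: eqP => [->|/eqP X_neq0]; first by rewrite !mul0r.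
rewrite mulr_sumr (eq_bigr (fun c => xlogterm R (count_mem c X) (size X))); last first.
  by move=> c _; rewrite mulrC divfK // pnatr_eq0.
rewrite -{1}(sum_count_mem X) natr_sum mulr_suml; apply: ler_sum => c _.
rewrite /xlogterm; case: eqP => [->|/eqP c_neq0]; first by rewrite mul0r.
have c_gt0 : (0 < count_mem c X)%N by rewrite lt0n.
have n_gt0 : (0 < size X)%N by rewrite lt0n.
rewrite ler_pM2l ?ltr0n // /log2 ler_pM2r ?invr_gt0 ?ln_gt0 ?ltr1n //.
rewrite ler_ln ?posrE ?divr_gt0 ?ltr0n //.
by rewrite ler_pdivlMr ?ltr0n // -natrM ler_nat.
Qed.

End Entropy.

Lemma parent_rcons (T : finType) (u : seq T) c : parent (rcons u c) = u.
Proof. by rewrite /parent size_rcons -cats1 take_size_cat. Qed.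

Lemma lam_rcons (T : finType) (u : seq T) c : lam (rcons u c) = Some c.
Proof. by case: u => //= x u; rewrite last_rcons. Qed.

Section TrieEntropy.
Variables (T : finType) (R : realType) (N : seq (seq T)) (k : nat).
Local Open Scope ring_scope.

Lemma sum_contexts (F : seq T -> nat) :
  (\sum_(w <- contexts N k) \sum_(u <- N | ctx k u == w) F u = \sum_(u <- N) F u)%N.
Proof.
under eq_bigr do rewrite big_mkcond.
rewrite exchange_big; apply: eq_big_seq => u uN /=.
rewrite -big_mkcond big_const_seq /= (eq_count (a2 := pred1 (ctx k u))); last exact: eq_sym.
by rewrite count_uniq_mem ?undup_uniq // mem_undup map_f //= addn0.
Qed.

Lemma Hk_eq0 : {in N &, forall u v, ctx k u = ctx k v -> out N u = out N v} ->
  Hk R N k = 0.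
Proof.
move=> out_ctx; rewrite /Hk big1_seq // => w /andP [_].
rewrite mem_undup => /mapP [u0 u0N ->]; apply: big1 => c _.
have -> : nwc N k (ctx k u0) c = if c \in out N u0 then nw N k (ctx k u0) else 0%N.
  rewrite /nwc /nw; case: ifP => c_out; last rewrite -(count_pred0 N);
    apply: eq_in_count => u uN /=; case: eqP => //= /(out_ctx u u0 uN u0N) ->;
    by rewrite c_out.
by case: ifP; rewrite ?subnn ?subn0 xlogtermnn xlogterm0n mul0r ?addr0 ?add0r.
Qed.

Lemma size_cover w :
  size (Defs.cover N k w) = (\sum_(u <- N | ctx k u == w) size (out N u))%N.
Proof. by rewrite size_flatten /shape -map_comp sumnE big_map big_filter. Qed.

Lemma count_cover w c :
  count_mem c (Defs.cover N k w) = (\sum_(u <- N | ctx k u == w) count_mem c (out N u))%N.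
Proof. by rewrite count_flatten sumnE !big_map big_filter. Qed.

Lemma labelHk_times_ge_log2 (y : nat) : (0 < y)%N ->
    {in N, forall u c, y * count_mem c (out N u) <= size (out N u)}%N ->
  (\sum_(u <- N) size (out N u))%N%:R * log2 y%:R <= labelHk_times R N k.
Proof.
move=> y_gt0 count_out; rewrite -sum_contexts natr_sum mulr_suml.
apply: ler_sum => w _; rewrite -size_cover; apply: H0_ge_log2 => // c.
rewrite count_cover size_cover big_distrr /= big_seq_cond [leqRHS]big_seq_cond.
by apply: leq_sum => u /andP [uN _]; apply: count_out.
Qed.
End TrieEntropy.

Lemma count_divn_iota (d K m : nat) : 0 < d ->
  count (fun c => c %/ d == m) (iota 0 (K * d)) = if m < K then d else 0.
Proof.
move=> d_gt0; elim: K => [|K IHK]; first by rewrite mul0n.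
rewrite mulSnr iotaD count_cat IHK add0n -[K * d]addn0 iotaDl count_map.
rewrite (@eq_in_count _ _ (fun=> K == m)) => [|j]; last first.
  by rewrite mem_iota /= => j_lt; rewrite divnMDl // divn_small ?addn0.
case: (K =P m) => [<-|/eqP K_neq_m].
  by rewrite ltnn ltnSn count_predT size_iota.
by rewrite count_pred0 addn0 ltnS ltn_neqAle eq_sym K_neq_m.
Qed.

Section CompleteTrie.
Variables (y h : nat).
Hypothesis y_gt0 : 0 < y.

Definition level (c : 'I_(h.+1 * y)) : nat := c %/ y.

Definition letters (m : nat) : seq 'I_(h.+1 * y) :=
  [seq c <- enum 'I_(h.+1 * y) | level c == m].

Fixpoint layer (m : nat) : seq (seq 'I_(h.+1 * y)) :=
  if m is m'.+1 then [seq rcons u c | u <- layer m', c <- letters m'] else [:: [::]].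

Definition levelled (u : seq 'I_(h.+1 * y)) : bool := map level u == iota 0 (size u).

Definition tree : seq (seq 'I_(h.+1 * y)) := flatten [seq layer m | m <- iota 0 h.+1].

Lemma mem_letters m c : (c \in letters m) = (level c == m).
Proof. by rewrite mem_filter mem_enum andbT. Qed.

Lemma uniq_letters m : uniq (letters m).
Proof. by rewrite filter_uniq ?enum_uniq. Qed.

Lemma size_letters m : m <= h -> size (letters m) = y.
Proof.
move=> m_le; rewrite size_filter -(count_map val (fun c => c %/ y == m)).
by rewrite val_enum_ord count_divn_iota // ltnS m_le.
Qed.

Lemma levelled_rcons u c : levelled (rcons u c) = levelled u && (level c == size u).
Proof.
by rewrite /levelled map_rcons size_rcons -[(size u).+1]addn1 iotaD cats1 eqseq_rcons.
Qed.

Lemma mem_layer m u : (u \in layer m) = (size u == m) && levelled u.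
Proof.
elim: m u => [|m IHm] u; case/lastP: u => [|u c] //=.
- by rewrite mem_seq1 -size_eq0 size_rcons.
- by apply/negbTE/allpairsP => -[[v d] [_ _ /(congr1 size)]]; rewrite size_rcons.
rewrite levelled_rcons size_rcons eqSS.
apply/allpairsP/idP => [[[v d] [/= v_in d_in /rcons_inj [-> ->]]]|].
  move: v_in d_in; rewrite IHm mem_letters => /andP [/eqP v_m v_lev] /eqP d_m.
  by rewrite v_lev v_m d_m eqxx.
case/andP => u_m /andP [u_lev c_lev]; exists (u, c).
by rewrite /= IHm u_m u_lev mem_letters -(eqP u_m) c_lev.
Qed.

Lemma uniq_layer m : uniq (layer m).
Proof.
elim: m => [|m IHm]; first by [].
apply: allpairs_uniq; [exact: IHm | exact: uniq_letters |].
by move=> [u c] [v d] _ _ /rcons_inj [-> ->].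
Qed.

Lemma size_layer m : m <= h -> size (layer m) = y ^ m.
Proof.
elim: m => [|m IHm m_lt]; first by [].
by rewrite size_allpairs IHm ?size_letters ?(ltnW m_lt) // expnSr.
Qed.

Lemma uniq_layers a b : uniq (flatten [seq layer m | m <- iota a b]).
Proof.
elim: b a => [|b IHb] a //; rewrite /= cat_uniq uniq_layer IHb andbT.
apply/hasPn => u /flatten_mapP [m]; rewrite mem_iota => /andP [a_lt _].
by rewrite !mem_layer => /andP [/eqP -> _]; rewrite gtn_eqF.
Qed.

Lemma mem_tree u : (u \in tree) = (size u <= h) && levelled u.
Proof.
apply/flatten_mapP/andP => [[m]|[u_le u_lev]].
  by rewrite mem_iota mem_layer => /andP [_ m_le] /andP [/eqP -> ->].
by exists (size u); rewrite ?mem_iota ?mem_layer ?eqxx.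
Qed.

Lemma uniq_tree : uniq tree.
Proof. exact: uniq_layers. Qed.

Lemma sum_tree (F : nat -> nat) :
  \sum_(u <- tree) F (size u) = \sum_(m < h.+1) y ^ m * F m.
Proof.
rewrite big_flatten big_map -{1}[h.+1]subn0 -/(index_iota 0 h.+1) big_mkord.
apply: eq_bigr => m _; rewrite (eq_big_seq (fun=> F m)) => [|u].
  by rewrite big_const_seq count_predT iter_addn_0 (size_layer (ltnSE (ltn_ord m))) mulnC.
by rewrite mem_layer => /andP [/eqP ->].
Qed.

Lemma size_tree : size tree = \sum_(m < h.+1) y ^ m.
Proof.
rewrite -sum1_size (sum_tree (fun=> 1)).
by apply: eq_bigr => m _; rewrite muln1.
Qed.

Lemma is_trie_tree : is_trie tree.
Proof.
apply/and3P; split; [exact: uniq_tree | by rewrite mem_tree |].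
apply/allP => u; case/lastP: u => [|u c] //.
rewrite parent_rcons !mem_tree size_rcons levelled_rcons.
by case/andP => /ltnW -> /andP [-> _].
Qed.

Lemma height_tree : height tree = h.
Proof.
apply/eqP; rewrite eqn_leq; apply/andP; split.
  by apply/bigmax_leqP_seq => u; rewrite mem_tree => /andP [].
have [u] : exists u, u \in layer h.
  by exists (nth [::] (layer h) 0); rewrite mem_nth // size_layer // expn_gt0 y_gt0.
rewrite mem_layer => /andP [/eqP u_h u_lev].
apply: (bigmaxn_sup_seq u); [by rewrite mem_tree u_h leqnn | by [] | by rewrite u_h].
Qed.

Lemma out_tree u : u \in tree ->
  out tree u = if size u < h then letters (size u) else [::].
Proof.
rewrite mem_tree => /andP [_ u_lev].
have -> : out tree u = [seq c <- enum 'I_(h.+1 * y) | (size u < h) && (level c == size u)].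
  by apply: eq_filter => c; rewrite mem_tree size_rcons levelled_rcons u_lev andTb.
case: ifP => _; last exact: filter_pred0.
exact: eq_filter.
Qed.

Lemma size_lam_tree u : u \in tree -> size u = if lam u is Some c then (level c).+1 else 0.
Proof.
case/lastP: u => [|u c] //; rewrite mem_tree levelled_rcons lam_rcons size_rcons.
by case/andP => _ /andP [_ /eqP ->].
Qed.

Lemma ctx_out_tree k : 0 < k ->
  {in tree &, forall u v, ctx k u = ctx k v -> out tree u = out tree v}.
Proof.
case: k => // k _ u v u_in v_in /= /rcons_inj [_ lam_eq].
by rewrite (out_tree u_in) (out_tree v_in) (size_lam_tree u_in) (size_lam_tree v_in) lam_eq.
Qed.

Lemma count_out_tree :
  {in tree, forall u c, y * count_mem c (out tree u) <= size (out tree u)}.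
Proof.
move=> u u_in c; rewrite (out_tree u_in); case: ifP => [u_lt|_]; last by rewrite muln0.
rewrite (count_uniq_mem _ (uniq_letters _)) (size_letters (ltnW u_lt)).
by rewrite -[leqRHS]muln1 leq_mul2l leq_b1 orbT.
Qed.

Lemma sum_size_out_tree :
  \sum_(u <- tree) size (out tree u) = (\sum_(m < h.+1) y ^ m) - 1.
Proof.
rewrite big_seq (eq_bigr (fun u => if size u < h then y else 0)) => [|u u_in]; last first.
  by rewrite (out_tree u_in); case: ifP => [u_lt|]; rewrite ?(size_letters (ltnW u_lt)).
rewrite -big_seq (sum_tree (fun m => if m < h then y else 0)).
rewrite big_ord_recr /= ltnn muln0 addn0 big_ord_recl expn0 addKn.
by apply: eq_bigr => m _; rewrite ltn_ord expnSr.
Qed.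

End CompleteTrie.

Local Open Scope ring_scope.

Theorem proposition1 (R : realType) (n y h : nat) :
  (1 <= y)%N -> n = (\sum_(i < h.+1) y ^ i)%N ->
  exists (s : nat) (N : seq (seq 'I_s)),
    (0 < s)%N /\ is_trie N /\ size N = n /\ height N = h /\
    (forall k : nat, (1 <= k)%N -> n%:R * Hk R N k = 0) /\
    (forall k : nat, (n - 1)%N%:R * log2 y%:R <= labelHk_times R N k).
Proof.
move=> y_gt0 ->; exists (h.+1 * y)%N, (tree y h).
split; first by rewrite muln_gt0.
split; first exact: is_trie_tree.
split; first exact: size_tree.
split; first exact: height_tree.
split=> k.
  by move=> k_gt0; rewrite Hk_eq0 ?mulr0 //; apply: ctx_out_tree.
rewrite -sum_size_out_tree //; apply: labelHk_times_ge_log2 => //.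
exact: count_out_tree.
Qed.
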